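(* Let $\nu\ge1$ and let $Z_1,\dots,Z_N$ be nonnegative random variables for some integer $N\ge2$. Suppose there exist constants $\Theta_1>0$, $\Theta_2>0$ such that $\mathbb EZ_i^{2p}\le[p^{\nu p}+\Theta_2^{\nu p}]\Theta_1^{2p}$ for all integers $p\ge1$ and all $i\in\{1,\dots,N\}$. Then for all real $p\ge1$, $$\mathbb E\max_{i\in\{1,\dots,N\}}Z_i^{2p}\le\big(p^{\nu p}+[\ln N+\Theta_2]^{\nu p}\big)\big((16e\nu)^\nu\Theta_1^2\big)^p.$$ *)

From HB Require Import structures.
From mathcomp Require Import all_boot all_order all_algebra.
From mathcomp Require Import all_classical all_reals all_analysis.
Set Implicit Arguments. Unset Strict Implicit. Unset Printing Implicit Defensive.

(* Interpolate between integer moments.  Take the integer q with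
   p + ln N < q <= p + ln N + 1 and s := p / q < 1.  Pointwise,
   max_i Z_i^(2p) <= (sum_i Z_i^(2q))^s, so Jensen's inequality for the
   concave map t |-> t^s bounds the expectation by (N * max_i E Z_i^(2q))^s.
   Since ln N <= q, N^s <= e^p; since q <= p + ln N + 1,
   (q + Theta2)^(nu p) <= 4^(nu p) (p^(nu p) + (ln N + Theta2)^(nu p)).
   Altogether the expectation is at most
   (2 e 4^nu Theta1^2)^p (p^(nu p) + (ln N + Theta2)^(nu p)), and
   2 e 4^nu <= (16 e nu)^nu when nu >= 1. *)
From mathcomp Require Import all_boot all_order all_algebra.
From mathcomp Require Import all_classical all_reals all_analysis.
From mathcomp Require Import measurable_realfun ring lra.
Import Order.TTheory GRing.Theory Num.Theory.
Local Open Scope ring_scope.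

Section powR_inequalities.
Variable R : realType.
Implicit Types a b c k n nu p q s t th x : R.

Lemma powRD_le_mul2 a b k : 0 <= a -> 0 <= b -> 0 <= k ->
  a `^ k + b `^ k <= 2 * (a + b) `^ k.
Proof.
move=> a0 b0 k0.
have ha : a `^ k <= (a + b) `^ k by apply: ge0_ler_powR; rewrite ?nnegrE; lra.
have hb : b `^ k <= (a + b) `^ k by apply: ge0_ler_powR; rewrite ?nnegrE; lra.
lra.
Qed.

Lemma powR_le_4powRD x p q k : 0 <= p -> 0 <= q -> 0 <= k -> 0 <= x ->
  x <= 2 * (p + q) -> x `^ k <= 4 `^ k * (p `^ k + q `^ k).
Proof.
move=> p0 q0 k0 x0 xle.
wlog le_pq : p q p0 q0 xle / p <= q.
  move=> wlog_le; have [le_pq|/ltW le_qp] := leP p q; first exact: wlog_le.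
  by rewrite addrC; apply: wlog_le; rewrite // addrC.
have -> : 4 = (2 * 2 : R) by rewrite -natrM.
rewrite powRM ?ler0n // -mulrA.
apply: le_trans (_ : (2 * (2 * q)) `^ k <= _).
  by apply: ge0_ler_powR; rewrite ?nnegrE; nra.
rewrite !powRM ?ler0n //; last lra.
rewrite ler_wpM2l ?powR_ge0 // ler_wpM2l ?powR_ge0 // lerDr powR_ge0 //.
Qed.

Lemma powR_div_le_expR x p q : 0 < x -> 0 < q -> 0 <= p -> ln x <= q ->
  x `^ (p / q) <= expR p.
Proof.
move=> x0 q0 p0 lnxq.
rewrite /powR gt_eqF // ler_expR mulrAC ler_pdivrMr //; nra.
Qed.

Lemma powR_le_tangent t s : 0 <= t -> 0 < s < 1 -> t `^ s <= s * t + (1 - s).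
Proof.
move=> t0 /andP[s0 s1].
have := @conjugate_powR R (t `^ s) 1 (s^-1) ((1 - s)^-1) (powR_ge0 _ _) ler01.
rewrite !invr_gt0 s0 subr_gt0 s1 !invrK addrC subrK => /(_ isT isT erefl).
by rewrite mulr1 -powRrM mulfV ?gt_eqF // powRr1 // powR1 mul1r mulrC.
Qed.

Lemma le_powR_16_expR nu : 1 <= nu ->
  2 * expR 1 * 4 `^ nu <= (16 * expR 1 * nu) `^ nu.
Proof.
move=> nu1.
have e1 : 1 < expR 1 :> R by rewrite expR_gt1.
have -> : 16 * expR 1 * nu = 4 * (4 * expR 1 * nu) by ring.
rewrite powRM; [|lra|nra].
rewrite mulrC ler_wpM2l ?powR_ge0 //.
apply: le_trans (_ : 4 * expR 1 * nu <= _); first nra.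
by apply: le1r_powR; nra.
Qed.

Lemma bigmax_powR_le_sum (I : finType) (a : I -> R) (s : R) :
  (forall i, 0 <= a i) -> 0 <= s ->
  \big[Num.max/0]_i a i `^ s <= (\sum_i a i) `^ s.
Proof.
move=> a0 s0; apply: bigmax_le => [|i _]; first exact: powR_ge0.
apply: ge0_ler_powR; rewrite ?nnegrE ?sumr_ge0 //.
by rewrite (bigD1 i) //= lerDl sumr_ge0.
Qed.

Lemma powR_moment_le nu t th q :
  0 <= nu -> 0 <= t -> 0 <= th -> 0 <= q ->
  (q `^ (nu * q) + t `^ (nu * q)) * th `^ (2 * q)
  <= 2 * ((q + t) `^ nu * th ^+ 2) `^ q.
Proof.
move=> nu0 t0 th0 q0.
rewrite powRM ?powR_ge0 ?sqr_ge0 // mulrA -powR_mulrn // -!powRrM.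
by rewrite ler_wpM2r ?powR_ge0 // powRD_le_mul2 ?mulr_ge0.
Qed.

Lemma moment_interpolation_le n nu c t p q :
  1 <= n -> 1 <= nu -> 0 <= c -> 0 <= t -> 1 <= p -> p <= q -> ln n <= q ->
  q <= p + ln n + 1 ->
  (n * (2 * ((q + t) `^ nu * c) `^ q)) `^ (p / q)
  <= (p `^ (nu * p) + (ln n + t) `^ (nu * p))
     * ((16 * expR 1 * nu) `^ nu * c) `^ p.
Proof.
move=> n1 nu1 c0 t0 p1 pq lnq qle.
have q0 : 0 < q by lra.
have lnn0 : 0 <= ln n by rewrite ln_ge0.
set L := ln n + t; set X := p `^ (nu * p) + L `^ (nu * p).
have X0 : 0 <= X by rewrite addr_ge0 ?powR_ge0.
have sq : q * (p / q) = p by rewrite mulrC divfK ?gt_eqF.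
have -> : (n * (2 * ((q + t) `^ nu * c) `^ q)) `^ (p / q)
    = n `^ (p / q) * (2 `^ (p / q) * ((q + t) `^ (nu * p) * c `^ p)).
  rewrite powRM ?mulr_ge0 ?powR_ge0 //; last lra.
  rewrite powRM ?powR_ge0 // -powRrM sq powRM ?powR_ge0 //.
  by rewrite -powRrM mulrC.
have hn : n `^ (p / q) <= expR 1 `^ p.
  by rewrite -expRM mul1r powR_div_le_expR //; lra.
have h2 : 2 `^ (p / q) <= 2 `^ p.
  by apply: ler_powR; rewrite ?ler1n // ler_pdivrMr // ler_peMr //; lra.
have hq : (q + t) `^ (nu * p) <= (4 `^ nu) `^ p * X.
  by rewrite -powRrM powR_le_4powRD ?mulr_ge0 // /L; lra.
apply: (@le_trans _ _ (expR 1 `^ p * (2 `^ p * ((4 `^ nu) `^ p * X * c `^ p)))).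
  apply: ler_pM; rewrite ?mulr_ge0 ?powR_ge0 //.
  apply: ler_pM; rewrite ?mulr_ge0 ?powR_ge0 //.
  by rewrite ler_wpM2r ?powR_ge0.
have -> : expR 1 `^ p * (2 `^ p * ((4 `^ nu) `^ p * X * c `^ p))
          = X * (2 * expR 1 * 4 `^ nu * c) `^ p.
  by rewrite powRM ?mulr_ge0 ?powR_ge0 // !powRM ?powR_ge0 //; ring.
rewrite ler_wpM2l // ge0_ler_powR ?nnegrE ?mulr_ge0 ?powR_ge0 //; try lra.
by rewrite ler_wpM2r // le_powR_16_expR.
Qed.

End powR_inequalities.

Section integral_bounds.
Context {d} {T : measurableType d} {R : realType}.
Implicit Types (f : T -> R).

Lemma measurable_bigmaxr (I : Type) (s : seq I) (h : I -> T -> R) :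
  (forall i, measurable_fun setT (h i)) ->
  measurable_fun setT (fun x => \big[Num.max/0]_(i <- s) h i x).
Proof.
move=> mh; elim: s => [|i s IH].
  by under eq_fun do rewrite big_nil; exact: measurable_cst.
by under eq_fun do rewrite big_cons; exact: measurable_maxr.
Qed.

Lemma ge0_integral_sum_le (mu : {measure set T -> \bar R}) (I : finType)
    (h : I -> T -> R) (b : R) :
  (forall i, measurable_fun setT (h i)) -> (forall i x, 0 <= h i x) ->
  (forall i, (\int[mu]_x (h i x)%:E <= b%:E)%E) ->
  (\int[mu]_x (\sum_i h i x)%:E <= (#|I|%:R * b)%:E)%E.
Proof.
move=> mh h0 hb.
under eq_integral do rewrite -sumEFin.
rewrite ge0_integral_sum //; last first.
- by move=> i x _; rewrite lee_fin.
- by move=> i; apply/measurable_EFinP.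
apply: le_trans (lee_sum _ (fun i _ => hb i)) _.
by rewrite sumEFin sumr_const mulr_natl.
Qed.

Variable P : probability T R.

Lemma ge0_integral_affine f (a b : R) :
  measurable_fun setT f -> (forall x, 0 <= f x) -> 0 <= a -> 0 <= b ->
  (\int[P]_x (a * f x + b)%R%:E = a%:E * \int[P]_x (f x)%:E + b%:E)%E.
Proof.
move=> mf f0 a0 b0.
under eq_integral do rewrite EFinD EFinM.
rewrite ge0_integralD //; last 2 first.
- by move=> x _; rewrite lee_fin mulr_ge0.
- by apply: measurable_funeM; exact/measurable_EFinP.
rewrite ge0_integralZl_EFin //; last first.
- exact/measurable_EFinP.
- by move=> x _; rewrite lee_fin.
rewrite integral_cst //; congr (_ + _).
by rewrite -[RHS]mule1; apply: congr1; exact: probability_setT.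
Qed.

Lemma integral_powR_le {f} {s M : R} :
  measurable_fun setT f -> (forall x, 0 <= f x) -> 0 < s < 1 -> 0 < M ->
  (\int[P]_x (f x)%:E <= M%:E)%E -> (\int[P]_x (f x `^ s)%:E <= (M `^ s)%:E)%E.
Proof.
move=> mf f0 s01 M0 intf; have /andP[s0 s1] := s01.
(* [a * t + b] is the tangent at [M] of the concave map [t |-> t `^ s]. *)
pose a := s * M `^ s / M; pose b := (1 - s) * M `^ s.
have a0 : 0 <= a by rewrite /a !mulr_ge0 ?invr_ge0 ?powR_ge0 // ltW.
have b0 : 0 <= b by rewrite /b mulr_ge0 ?powR_ge0 //; lra.
have tangent x : f x `^ s <= a * f x + b.
  have -> : a * f x + b = (s * (f x / M) + (1 - s)) * M `^ s.
    by rewrite /a /b; field; rewrite gt_eqF.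
  have fM0 : 0 <= f x / M by rewrite divr_ge0 ?f0 ?(ltW M0).
  rewrite -{1}(divfK (lt0r_neq0 M0) (f x)) powRM ?(ltW M0) //.
  by rewrite ler_wpM2r ?powR_ge0 // powR_le_tangent.
apply: (@le_trans _ _ (\int[P]_x (a * f x + b)%R%:E)%E).
  apply: ge0_le_integral => //.
  - by move=> x _; rewrite lee_fin powR_ge0.
  - by apply/measurable_EFinP; exact: measurableT_comp (measurable_powR _) mf.
  - by apply/measurable_EFinP; apply: measurable_funD => //; exact: measurable_funM.
  - by move=> x _; rewrite lee_fin tangent.
have -> : M `^ s = a * M + b by rewrite /a /b; field; rewrite gt_eqF.
rewrite ge0_integral_affine // EFinD leeD2r // [X in (_ <= X)%E]EFinM.
by apply: lee_wpmul2l; rewrite ?lee_fin.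
Qed.

Lemma integral_bigmax_powR_le {I : finType} {h : I -> T -> R} {s b : R} :
  (forall i, measurable_fun setT (h i)) -> (forall i x, 0 <= h i x) ->
  (0 < #|I|)%N -> 0 < s < 1 -> 0 < b ->
  (forall i, (\int[P]_x (h i x)%:E <= b%:E)%E) ->
  (\int[P]_x (\big[Num.max/0]_i h i x `^ s)%:E <= ((#|I|%:R * b) `^ s)%:E)%E.
Proof.
move=> mh h0 I0 s01 b0 hb; have /andP[s0 _] := s01.
pose S x := \sum_i h i x.
have mS : measurable_fun setT S by exact: measurable_sum.
apply: (@le_trans _ _ (\int[P]_x (S x `^ s)%:E)%E).
  apply: ge0_le_integral => //.
  - by move=> x _; rewrite lee_fin bigmax_ge_id.
  - apply/measurable_EFinP/measurable_bigmaxr => i.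
    exact: measurableT_comp (measurable_powR _) (mh i).
  - by apply/measurable_EFinP; exact: measurableT_comp (measurable_powR _) mS.
  - by move=> x _; rewrite lee_fin bigmax_powR_le_sum // ltW.
apply: integral_powR_le => //.
- by move=> x; rewrite sumr_ge0.
- by rewrite mulr_gt0 // ltr0n.
- exact: ge0_integral_sum_le.
Qed.

End integral_bounds.

Local Open Scope ereal_scope.

Theorem corollaryB5 (d : measure_display) (T : measurableType d) (R : realType)
  (P : probability T R) (N : nat) (Z : 'I_N -> T -> R)
  (nu Theta1 Theta2 : R) :
  (2 <= N)%N ->
  (1 <= nu)%R ->
  (0 < Theta1)%R -> (0 < Theta2)%R ->
  (forall i, measurable_fun setT (Z i)) ->
  (forall i x, (0 <= Z i x)%R) ->
  (forall (p : nat) (i : 'I_N), (1 <= p)%N ->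
     \int[P]_x (((Z i x) `^ (2 * p%:R))%:E)
       <= (((p%:R `^ (nu * p%:R) + Theta2 `^ (nu * p%:R)) * Theta1 `^ (2 * p%:R))%R)%:E) ->
  forall p : R, (1 <= p)%R ->
    \int[P]_x ((\big[Num.max/0%R]_(i < N) ((Z i x) `^ (2 * p)))%:E)
      <= (((p `^ (nu * p) + (ln N%:R + Theta2) `^ (nu * p))
           * ((16 * expR 1 * nu) `^ nu * Theta1 ^+ 2) `^ p)%R)%:E.
Proof.
move=> N2 nu1 Th1 Th2 mZ _ moments p p1.
have lnN0 : (0 <= ln (N%:R : R))%R by rewrite ln_ge0 // ler1n ltnW.
pose q := (Num.truncn (p + ln (N%:R : R))).+1.
have q_gt : (p + ln N%:R < q%:R)%R := truncnS_gt _.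
have q_le : (q%:R <= p + ln N%:R + 1)%R by rewrite /q -natr1 lerD2r truncn_le; lra.
have q0 : (0 < q%:R :> R)%R by lra.
have Z_pow i x : (Z i x `^ (2 * p) = (Z i x `^ (2 * q%:R)) `^ (p / q%:R))%R.
  by rewrite -powRrM; congr powR; field; rewrite gt_eqF.
have mZq i : measurable_fun setT (fun x => Z i x `^ (2 * q%:R))%R.
  exact: measurableT_comp (measurable_powR _) (mZ i).
have Zq0 i x : (0 <= Z i x `^ (2 * q%:R))%R by exact: powR_ge0.
have s01 : (0 < p / q%:R < 1)%R by rewrite divr_gt0 ?ltr_pdivrMr ?mul1r //=; lra.
have b0 : (0 < 2 * ((q%:R + Theta2) `^ nu * Theta1 ^+ 2) `^ q%:R)%R.
  by rewrite !(mulr_gt0, powR_gt0, exprn_gt0) //; lra.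
have moment_q i : \int[P]_x (Z i x `^ (2 * q%:R))%:E
    <= (2 * ((q%:R + Theta2) `^ nu * Theta1 ^+ 2) `^ q%:R)%R%:E.
  by apply: le_trans (moments q i isT) _; rewrite lee_fin powR_moment_le; lra.
have N0 : (0 < #|'I_N|)%N by rewrite card_ord ltnW.
under eq_integral do under eq_bigr do rewrite Z_pow.
apply: (le_trans (integral_bigmax_powR_le P mZq Zq0 N0 s01 b0 moment_q)).
rewrite card_ord lee_fin moment_interpolation_le ?sqr_ge0 ?ler1n ?(ltnW N2) //; lra.
Qed.
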